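(* Let $A\in\mathbb{C}^{m\times n}$ have rank $r$, $B\in\mathbb{C}^{m\times n}$ have rank $s$, and $E=B-A$. Then $$\|B^{\dagger}-A^{\dagger}\|_{F}^{2}\geq\max\big\{\delta'_{1}+\|B^{\dagger}EA^{\dagger}\|_{F}^{2},\ \delta'_{2}+\|A^{\dagger}EB^{\dagger}\|_{F}^{2}\big\},$$ where $$\delta'_{1}:=\frac{\|E\|_{F}^{2}-\min\big\{\|B\|_{2}^{2}\|AA^{\dagger}EB^{\dagger}\|_{F}^{2},\|A\|_{2}^{2}\|A^{\dagger}EB^{\dagger}B\|_{F}^{2}\big\}}{\max\big\{\|A\|_{2}^{4},\|B\|_{2}^{4}\big\}},$$ $$\delta'_{2}:=\frac{\|E\|_{F}^{2}-\min\big\{\|A\|_{2}^{2}\|BB^{\dagger}EA^{\dagger}\|_{F}^{2},\|B\|_{2}^{2}\|B^{\dagger}EA^{\dagger}A\|_{F}^{2}\big\}}{\max\big\{\|A\|_{2}^{4},\|B\|_{2}^{4}\big\}}.$$ In particular, if $s=r$, then $$\|B^{\dagger}-A^{\dagger}\|_{F}^{2}\geq\max\big\{\varepsilon'_{1}+\|B^{\dagger}EA^{\dagger}\|_{F}^{2},\ \varepsilon'_{2}+\|A^{\dagger}EB^{\dagger}\|_{F}^{2}\big\},$$ where $$\varepsilon'_{1}:=\frac{\|E\|_{F}^{2}-\min\big\{\|A\|_{2}^{2}\|BB^{\dagger}EA^{\dagger}\|_{F}^{2},\|B\|_{2}^{2}\|B^{\dagger}EA^{\dagger}A\|_{F}^{2}\big\}}{\|A\|_{2}^{2}\|B\|_{2}^{2}},$$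 $$\varepsilon'_{2}:=\frac{\|E\|_{F}^{2}-\min\big\{\|B\|_{2}^{2}\|AA^{\dagger}EB^{\dagger}\|_{F}^{2},\|A\|_{2}^{2}\|A^{\dagger}EB^{\dagger}B\|_{F}^{2}\big\}}{\|A\|_{2}^{2}\|B\|_{2}^{2}}.$$
   Context: $M^{\dagger}$ denotes the Moore–Penrose inverse of $M$, $\|\cdot\|_{2}$ the spectral norm and $\|\cdot\|_{F}$ the Frobenius norm. *)

From HB Require Import structures.
From mathcomp Require Import all_boot all_order all_algebra.
Set Implicit Arguments. Unset Strict Implicit. Unset Printing Implicit Defensive.
Import Order.TTheory GRing.Theory Num.Theory.
Local Open Scope ring_scope.

(* Scalars: an arbitrary numClosedFieldType C (e.g. the complex numbers). *)

Definition ctrmx (C : numClosedFieldType) (m n : nat) (A : 'M[C]_(m, n)) : 'M[C]_(n, m) :=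
  map_mx Num.conj (A^T).

Definition vnorm (C : numClosedFieldType) (n : nat) (x : 'cV[C]_n) : C :=
  sqrtC (\sum_(i < n) `|x i ord0| ^+ 2).

Definition fnorm (C : numClosedFieldType) (m n : nat) (A : 'M[C]_(m, n)) : C :=
  sqrtC (\sum_(i < m) \sum_(j < n) `|A i j| ^+ 2).

Definition is_spec_norm (C : numClosedFieldType) (m n : nat) (A : 'M[C]_(m, n)) (c : C) : Prop :=
  (exists x : 'cV[C]_n, vnorm x <= 1 /\ vnorm (A *m x) = c) /\
  (forall x : 'cV[C]_n, vnorm x <= 1 -> vnorm (A *m x) <= c).

Definition is_pinv (C : numClosedFieldType) (m n : nat) (A : 'M[C]_(m, n)) (X : 'M[C]_(n, m)) : Prop :=
  [/\ A *m X *m A = A, X *m A *m X = X,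
      ctrmx (A *m X) = A *m X & ctrmx (X *m A) = X *m A].

(* The orthogonal projections A A^+, A^+ A, B B^+, B^+ B
   split both sides into orthogonal pieces (Pythagoras for the Frobenius norm):
     |B^+ - A^+|^2 = |B^+ E A^+|^2 + |B^+ (I - A A^+)|^2 + |(I - B^+ B) A^+|^2,
     |E|^2 = |A A^+ E B^+ B|^2 + |(I - A A^+) B|^2 + |A (I - B^+ B)|^2.
   The first term of the second identity is at most either entry of the minimum,
   and |X Y|_F <= |X|_2 |Y|_F bounds its last two terms by |B|_2^4 and |A|_2^4
   times the last two terms of the first identity.  When rank A = rank B, the
   projections satisfy |A A^+ (I - B B^+)|_F = |B B^+ (I - A A^+)|_F (both squares
   equal rank A - tr (A A^+ B B^+)), and likewise for A^+ A and B^+ B; using this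
   in the second identity written for A - B gives the factor |A|_2^2 |B|_2^2.
   The bounds with A^+ E B^+ follow by exchanging A and B. *)

From HB Require Import structures.
From mathcomp Require Import all_boot all_order all_algebra.
From mathcomp Require Import ring.
Set Implicit Arguments. Unset Strict Implicit. Unset Printing Implicit Defensive.
Import Order.TTheory GRing.Theory Num.Theory.
Local Open Scope ring_scope.

Lemma ler_wdivrMr (F : numFieldType) (x y z : F) :
  0 <= y -> 0 <= z -> x <= y * z -> x / z <= y.
Proof.
move=> y_ge0; rewrite le_eqVlt => /predU1P[<- _ | z_gt0]; last by rewrite ler_pdivrMr.
by rewrite invr0 mulr0.
Qed.

Lemma porder_le_min d (T : porderType d) (x y z : T) :
  (z <= x -> z <= y -> z <= Order.min x y)%O.
Proof. by rewrite /Order.min; case: ifP. Qed.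

Lemma porder_ge_max d (T : porderType d) (x y z : T) :
  (x <= z -> y <= z -> Order.max x y <= z)%O.
Proof. by rewrite /Order.max; case: ifP. Qed.

Section ConjugateTranspose.
Variable C : numClosedFieldType.

Lemma ctrmxK m n (X : 'M[C]_(m, n)) : ctrmx (ctrmx X) = X.
Proof. by apply/matrixP => i j; rewrite !mxE conjCK. Qed.

Lemma ctrmxM m n p (X : 'M[C]_(m, n)) (Y : 'M[C]_(n, p)) :
  ctrmx (X *m Y) = ctrmx Y *m ctrmx X.
Proof. by rewrite /ctrmx trmx_mul map_mxM. Qed.

Lemma ctrmx0 m n : ctrmx (0 : 'M[C]_(m, n)) = 0.
Proof. by rewrite /ctrmx trmx0 map_mx0. Qed.

Lemma ctrmxB m n (X Y : 'M[C]_(m, n)) : ctrmx (X - Y) = ctrmx X - ctrmx Y.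
Proof. by rewrite /ctrmx linearB map_mxB. Qed.

Lemma ctrmxD m n (X Y : 'M[C]_(m, n)) : ctrmx (X + Y) = ctrmx X + ctrmx Y.
Proof. by rewrite /ctrmx linearD map_mxD. Qed.

Lemma mxtrace_ctrmx n (X : 'M[C]_n) : \tr (ctrmx X) = (\tr X)^*.
Proof. by rewrite rmorph_sum; apply: eq_bigr => i _; rewrite !mxE. Qed.

Lemma ctrmxZ m n (c : C) (X : 'M[C]_(m, n)) : ctrmx (c *: X) = c^* *: ctrmx X.
Proof. by apply/matrixP => i j; rewrite !mxE rmorphM. Qed.

Lemma ctrmx_compl n (P : 'M[C]_n) : ctrmx P = P -> ctrmx (1%:M - P) = 1%:M - P.
Proof. by move=> hP; rewrite ctrmxB /ctrmx trmx1 map_mx1 -[in RHS]hP. Qed.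

End ConjugateTranspose.

Section FrobeniusNorm.
Variable C : numClosedFieldType.

Lemma sqr_fnormE m n (X : 'M[C]_(m, n)) : fnorm X ^+ 2 = \tr (X *m ctrmx X).
Proof.
rewrite sqrtCK; apply: eq_bigr => i _; rewrite mxE.
by apply: eq_bigr => j _; rewrite !mxE normCK.
Qed.

Lemma sqr_fnorm_ge0 m n (X : 'M[C]_(m, n)) : 0 <= fnorm X ^+ 2.
Proof. by rewrite sqrtCK; do 2!apply: sumr_ge0 => ? _; rewrite exprn_ge0. Qed.

Lemma fnorm_ge0 m n (X : 'M[C]_(m, n)) : 0 <= fnorm X.
Proof. by rewrite sqrtC_ge0 -[X in _ <= X]sqrtCK sqr_fnorm_ge0. Qed.

Lemma fnorm_eq0 m n (X : 'M[C]_(m, n)) : (fnorm X == 0) = (X == 0).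
Proof.
apply/idP/eqP => [|->]; last first.
  by rewrite /fnorm big1 ?sqrtC0 // => i _; rewrite big1 // => j _; rewrite mxE normr0 expr0n.
have sqr_ge0 (x : C) : 0 <= `|x| ^+ 2 by rewrite exprn_ge0.
rewrite sqrtC_eq0 => /eqP/psumr_eq0P => /(_ (fun i _ => sumr_ge0 _ (fun j _ => sqr_ge0 _))) X0.
apply/matrixP => i j; apply/eqP; rewrite mxE -normr_eq0 -sqrf_eq0; apply/eqP.
exact: (psumr_eq0P (fun j _ => sqr_ge0 _) (X0 i isT)).
Qed.

Lemma fnorm0 m n : fnorm (0 : 'M[C]_(m, n)) = 0.
Proof. by apply/eqP; rewrite fnorm_eq0. Qed.

Lemma vnorm_fnorm n (x : 'cV[C]_n) : vnorm x = fnorm x.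
Proof. by rewrite /vnorm /fnorm; congr sqrtC; apply: eq_bigr => i _; rewrite big_ord1. Qed.

Lemma fnormE m n (X : 'M[C]_(m, n)) : fnorm X = sqrtC (\tr (X *m ctrmx X)).
Proof. by rewrite -sqr_fnormE sqrCK ?fnorm_ge0. Qed.

Lemma fnorm_ctrmx m n (X : 'M[C]_(m, n)) : fnorm (ctrmx X) = fnorm X.
Proof. by rewrite !fnormE ctrmxK mxtrace_mulC. Qed.

Lemma fnormN m n (X : 'M[C]_(m, n)) : fnorm (- X) = fnorm X.
Proof. by rewrite /fnorm; congr sqrtC; do 2!apply: eq_bigr => ? _; rewrite mxE normrN. Qed.

Lemma fnormZ m n (c : C) (X : 'M[C]_(m, n)) : fnorm (c *: X) = `|c| * fnorm X.
Proof.
rewrite !fnormE ctrmxZ -scalemxAl -scalemxAr !mxtraceZ mulrA -normCK.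
by rewrite sqrtCM ?nnegrE ?exprn_ge0 // ?sqrCK // -sqr_fnormE sqr_fnorm_ge0.
Qed.

Lemma sqr_fnorm_col m n (X : 'M[C]_(m, n)) : fnorm X ^+ 2 = \sum_j fnorm (col j X) ^+ 2.
Proof.
rewrite sqrtCK exchange_big; apply: eq_bigr => j _; rewrite sqrtCK.
by apply: eq_bigr => i _; rewrite big_ord1 mxE.
Qed.

Lemma sqr_fnorm_add_orthol m n (P : 'M[C]_m) (X Y : 'M[C]_(m, n)) :
  ctrmx P = P -> P *m X = X -> P *m Y = 0 ->
  fnorm (X + Y) ^+ 2 = fnorm X ^+ 2 + fnorm Y ^+ 2.
Proof.
move=> hermP PX PY0.
have YP0 : ctrmx Y *m P = 0 by rewrite -[P]hermP -ctrmxM PY0 ctrmx0.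
have cross0 : \tr (X *m ctrmx Y) = 0.
  by rewrite -PX -mulmxA mxtrace_mulC -mulmxA YP0 mulmx0 mxtrace0.
have cross0' : \tr (Y *m ctrmx X) = 0.
  by rewrite -[Y in Y *m _]ctrmxK -ctrmxM mxtrace_ctrmx cross0 conjC0.
by rewrite !sqr_fnormE ctrmxD mulmxDl !mulmxDr !mxtraceD cross0 cross0' addr0 add0r.
Qed.

Lemma sqr_fnorm_add_orthor m n (P : 'M[C]_n) (X Y : 'M[C]_(m, n)) :
  ctrmx P = P -> X *m P = X -> Y *m P = 0 ->
  fnorm (X + Y) ^+ 2 = fnorm X ^+ 2 + fnorm Y ^+ 2.
Proof.
move=> hermP XP YP0; rewrite -fnorm_ctrmx ctrmxD -[fnorm X]fnorm_ctrmx -[fnorm Y]fnorm_ctrmx.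
by apply: (sqr_fnorm_add_orthol hermP); rewrite -hermP -ctrmxM ?XP ?YP0 ?ctrmx0.
Qed.

End FrobeniusNorm.

Section SpectralNorm.
Variables (C : numClosedFieldType) (m n : nat) (A : 'M[C]_(m, n)) (a : C).
Hypothesis specA : is_spec_norm A a.

Lemma spec_norm_ge0 : 0 <= a.
Proof.
have [_ /(_ 0)] := specA; rewrite mulmx0 !vnorm_fnorm !fnorm0.
by move=> /(_ ler01).
Qed.

Lemma fnorm_mulmx_col_le (x : 'cV[C]_n) : fnorm (A *m x) <= a * fnorm x.
Proof.
have [-> | x_neq0] := eqVneq x 0; first by rewrite mulmx0 !fnorm0 mulr0.
have s_gt0 : 0 < fnorm x by rewrite lt_def fnorm_ge0 fnorm_eq0 x_neq0.
have [_ /(_ ((fnorm x)^-1 *: x))] := specA.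
rewrite -scalemxAr !vnorm_fnorm !fnormZ ger0_norm ?invr_ge0 ?fnorm_ge0 //.
rewrite mulVf ?gt_eqF // lexx ler_pdivrMl // mulrC.
by move=> /(_ isT).
Qed.

Lemma sqr_fnorm_mulmxl_le p (X : 'M[C]_(n, p)) :
  fnorm (A *m X) ^+ 2 <= a ^+ 2 * fnorm X ^+ 2.
Proof.
rewrite [X in _ <= _ * X]sqr_fnorm_col sqr_fnorm_col mulr_sumr.
apply: ler_sum => j _; rewrite -exprMn colE -mulmxA -colE.
by rewrite lerXn2r ?nnegrE ?mulr_ge0 ?fnorm_ge0 ?spec_norm_ge0 ?fnorm_mulmx_col_le.
Qed.

Lemma sqr_fnorm_ctrmx_mulmxl_le p (Y : 'M[C]_(m, p)) :
  fnorm (ctrmx A *m Y) ^+ 2 <= a ^+ 2 * fnorm Y ^+ 2.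
Proof.
set t := a ^+ 2; set Z := ctrmx A *m Y.
have t_ge0 : 0 <= t by rewrite exprn_ge0 ?spec_norm_ge0.
have AZ_le : fnorm (A *m Z) ^+ 2 <= t * fnorm Z ^+ 2 := sqr_fnorm_mulmxl_le Z.
have trAZY : \tr (A *m Z *m ctrmx Y) = fnorm Z ^+ 2.
  by rewrite sqr_fnormE [in ctrmx Z]/Z ctrmxM ctrmxK -mulmxA mxtrace_mulC mulmxA.
have trYAZ : \tr (Y *m ctrmx (A *m Z)) = fnorm Z ^+ 2.
  by rewrite ctrmxM mulmxA mxtrace_mulC mulmxA sqr_fnormE.
have [t0 | t_neq0] := eqVneq t 0.
  have /eqP AZ0 : A *m Z == 0.
    by rewrite -fnorm_eq0 -sqrf_eq0 eq_le sqr_fnorm_ge0 andbT -(mul0r (fnorm Z ^+ 2)) -t0.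
  by rewrite -trAZY AZ0 mul0mx mxtrace0 mulr_ge0 ?sqr_fnorm_ge0.
(* As [<AZ, Y> = |Z|^2], expanding [0 <= |AZ - tY|^2] and using [|AZ|^2 <= t |Z|^2]
   gives [0 <= t (t |Y|^2 - |Z|^2)]. *)
have := sqr_fnorm_ge0 (A *m Z - t *: Y).
rewrite sqr_fnormE ctrmxB ctrmxZ conj_Creal ?ger0_real // mulmxBl !mulmxBr.
rewrite -!scalemxAl -!scalemxAr !linearB /= !mxtraceZ trAZY trYAZ -!sqr_fnormE => expand_ge0.
have : 0 <= t * (t * fnorm Y ^+ 2 - fnorm Z ^+ 2).
  apply: le_trans expand_ge0 _; rewrite -subr_ge0.
  have -> : t * (t * fnorm Y ^+ 2 - fnorm Z ^+ 2)
            - (fnorm (A *m Z) ^+ 2 - t * fnorm Z ^+ 2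
               - (t * fnorm Z ^+ 2 - t * (t * fnorm Y ^+ 2)))
          = t * fnorm Z ^+ 2 - fnorm (A *m Z) ^+ 2 by ring.
  by rewrite subr_ge0.
by rewrite pmulr_rge0 ?subr_ge0 // lt_def t_neq0.
Qed.

Lemma sqr_fnorm_mulmxr_le p (X : 'M[C]_(p, m)) :
  fnorm (X *m A) ^+ 2 <= a ^+ 2 * fnorm X ^+ 2.
Proof.
by rewrite -fnorm_ctrmx ctrmxM -[fnorm X]fnorm_ctrmx sqr_fnorm_ctrmx_mulmxl_le.
Qed.

End SpectralNorm.

Lemma mxtrace_idem (F : fieldType) n (P : 'M[F]_n) : P *m P = P -> \tr P = (\rank P)%:R.
Proof.
move=> idemP.
have factor_commute r (X : 'M[F]_(n, r)) (Y : 'M[F]_(r, n)) X' Y' :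
    X' *m X = 1%:M -> Y *m Y' = 1%:M -> X *m Y *m (X *m Y) = X *m Y -> Y *m X = 1%:M.
  move=> X'X YY' /(congr1 (fun M => X' *m M *m Y')) /=.
  by rewrite !mulmxA X'X !mul1mx -!mulmxA YY' !mulmx1.
rewrite -{1}(mulmx_base P) mxtrace_mulC.
rewrite (factor_commute _ _ _ _ _ (mulVpmx (col_base_full P)) (mulmxVp (row_base_free P))).
  exact: mxtrace1.
by rewrite mulmx_base idemP.
Qed.

Lemma mulmx_compl_idem (R : pzRingType) n (P : 'M[R]_n) :
  P *m P = P -> P *m (1%:M - P) = 0.
Proof. by move=> idemP; rewrite mulmxBr mulmx1 idemP subrr. Qed.

Lemma mulmx_idem_compl (R : pzRingType) n (P : 'M[R]_n) :
  P *m P = P -> (1%:M - P) *m P = 0.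
Proof. by move=> idemP; rewrite mulmxBl mul1mx idemP subrr. Qed.

Lemma sqr_fnorm_mul_compl (C : numClosedFieldType) n (P Q : 'M[C]_n) :
  ctrmx P = P -> P *m P = P -> ctrmx Q = Q -> Q *m Q = Q ->
  fnorm (P *m (1%:M - Q)) ^+ 2 = \tr P - \tr (P *m Q).
Proof.
move=> hermP idemP hermQ idemQ.
rewrite sqr_fnormE ctrmxM ctrmx_compl // hermP mulmxA mxtrace_mulC !mulmxA idemP.
by rewrite mulmxBr mulmx1 -mulmxA mulmx_idem_compl // mulmx0 subr0 mulmxBr mulmx1 linearB.
Qed.

Lemma sqr_fnorm_mul_compl_eqrank (C : numClosedFieldType) n (P Q : 'M[C]_n) :
  ctrmx P = P -> P *m P = P -> ctrmx Q = Q -> Q *m Q = Q -> \rank P = \rank Q ->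
  fnorm (P *m (1%:M - Q)) ^+ 2 = fnorm (Q *m (1%:M - P)) ^+ 2.
Proof.
move=> hermP idemP hermQ idemQ rankPQ.
by rewrite !sqr_fnorm_mul_compl // (mxtrace_idem idemP) (mxtrace_idem idemQ) rankPQ mxtrace_mulC.
Qed.

Section PseudoInverse.
Variables (C : numClosedFieldType) (m n : nat) (A : 'M[C]_(m, n)) (Ad : 'M[C]_(n, m)).
Hypothesis pinvA : is_pinv A Ad.

Lemma pinvK : A *m Ad *m A = A. Proof. by case: pinvA. Qed.
Lemma pinvKV : Ad *m A *m Ad = Ad. Proof. by case: pinvA. Qed.
Lemma pinv_herml : ctrmx (A *m Ad) = A *m Ad. Proof. by case: pinvA. Qed.
Lemma pinv_hermr : ctrmx (Ad *m A) = Ad *m A. Proof. by case: pinvA. Qed.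

Lemma pinv_idempl : A *m Ad *m (A *m Ad) = A *m Ad.
Proof. by rewrite mulmxA pinvK. Qed.

Lemma pinv_idempr : Ad *m A *m (Ad *m A) = Ad *m A.
Proof. by rewrite mulmxA pinvKV. Qed.

Lemma mxrank_pinvl : \rank (A *m Ad) = \rank A.
Proof. by apply/eqP; rewrite eqn_leq mxrankM_maxl -{1}pinvK mxrankM_maxl. Qed.

Lemma mxrank_pinvr : \rank (Ad *m A) = \rank A.
Proof. by apply/eqP; rewrite eqn_leq mxrankM_maxr -{1}pinvK -mulmxA mxrankM_maxr. Qed.

Variable a : C.
Hypothesis specA : is_spec_norm A a.

Lemma sqr_fnorm_mulmxl_pinv_le p (X : 'M[C]_(n, p)) :
  fnorm (A *m X) ^+ 2 <= a ^+ 2 * fnorm (Ad *m A *m X) ^+ 2.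
Proof. by rewrite -{1}pinvK -!mulmxA sqr_fnorm_mulmxl_le // mulmxA. Qed.

Lemma sqr_fnorm_mulmxr_pinv_le p (X : 'M[C]_(p, m)) :
  fnorm (X *m A) ^+ 2 <= a ^+ 2 * fnorm (X *m (A *m Ad)) ^+ 2.
Proof. by rewrite -{1}pinvK !mulmxA sqr_fnorm_mulmxr_le. Qed.

Lemma sqr_fnorm_herm_mulmx_le (H : 'M[C]_m) : ctrmx H = H ->
  fnorm (H *m A) ^+ 2 <= a ^+ 2 * fnorm (A *m Ad *m H) ^+ 2.
Proof.
move=> hermH; rewrite -[fnorm (A *m Ad *m H)]fnorm_ctrmx ctrmxM hermH pinv_herml.
exact: sqr_fnorm_mulmxr_pinv_le.
Qed.

Lemma sqr_fnorm_pinv_mulmx_herm_le (H : 'M[C]_n) : ctrmx H = H ->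
  fnorm (Ad *m A *m H) ^+ 2 <= a ^+ 2 * fnorm (H *m Ad) ^+ 2.
Proof.
move=> hermH; rewrite -fnorm_ctrmx ctrmxM hermH pinv_hermr mulmxA.
exact: sqr_fnorm_mulmxr_le.
Qed.

End PseudoInverse.

Section Perturbation.
Variables (C : numClosedFieldType) (m n : nat).
Variables (A B : 'M[C]_(m, n)) (Ad Bd : 'M[C]_(n, m)).
Hypotheses (pinvA : is_pinv A Ad) (pinvB : is_pinv B Bd).
Local Notation E := (B - A).

Lemma sqr_fnorm_pinv_sub_decomp : fnorm (Bd - Ad) ^+ 2 =
  fnorm (Bd *m E *m Ad) ^+ 2 + fnorm (Bd *m (1%:M - A *m Ad)) ^+ 2
  + fnorm ((1%:M - Bd *m B) *m Ad) ^+ 2.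
Proof.
have -> : Bd - Ad = - (Bd *m E *m Ad) + Bd *m (1%:M - A *m Ad) - (1%:M - Bd *m B) *m Ad.
  rewrite !mulmxBr !mulmxBl mulmx1 mul1mx !mulmxA.
  set x := Bd *m B *m Ad; set y := Bd *m A *m Ad.
  by rewrite opprB [y - x + _]addrC addrA subrK opprB addrA subrK.
rewrite (sqr_fnorm_add_orthol (pinv_hermr pinvB)); first last.
- by rewrite mulmxN mulmxA mulmx_compl_idem ?mul0mx ?oppr0 // pinv_idempr.
- by rewrite mulmxDr mulmxN !mulmxA pinvKV.
rewrite (sqr_fnorm_add_orthor (pinv_herml pinvA)) ?fnormN //.
- by rewrite mulNmx -!mulmxA (mulmxA Ad) pinvKV.
- by rewrite -mulmxA mulmx_idem_compl ?mulmx0 // pinv_idempl.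
Qed.

Lemma sqr_fnorm_sub_decomp : fnorm E ^+ 2 =
  fnorm (A *m Ad *m E *m Bd *m B) ^+ 2 + fnorm ((1%:M - A *m Ad) *m B) ^+ 2
  + fnorm (A *m (1%:M - Bd *m B)) ^+ 2.
Proof.
have decomp : E = A *m Ad *m E *m (Bd *m B) + (1%:M - A *m Ad) *m B - A *m (1%:M - Bd *m B).
  rewrite mulmxBr mulmxBl (pinvK pinvA) -[_ *m B *m _]mulmxA (mulmxA B) (pinvK pinvB).
  rewrite mulmxBl mulmxBr mul1mx mulmx1.
  set x := A *m Ad *m B; set y := A *m (Bd *m B).
  by rewrite opprB [x - y + _]addrC [B - x + _]addrA subrK addrA subrK.
rewrite {1}decomp (sqr_fnorm_add_orthor (pinv_hermr pinvB)); first last.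
- by rewrite mulNmx -mulmxA mulmx_idem_compl ?mulmx0 ?oppr0 // pinv_idempr.
- by rewrite mulmxDl -!mulmxA (mulmxA B) (pinvK pinvB).
rewrite (sqr_fnorm_add_orthol (pinv_herml pinvA)) ?fnormN; first by rewrite mulmxA.
- by rewrite !mulmxA (pinvK pinvA).
- by rewrite mulmxA mulmx_compl_idem ?mul0mx // pinv_idempl.
Qed.

Variables (a b : C).
Hypotheses (specA : is_spec_norm A a) (specB : is_spec_norm B b).

Lemma sqr_fnorm_sub_min_le : fnorm E ^+ 2
    - Num.min (b ^+ 2 * fnorm (A *m Ad *m E *m Bd) ^+ 2)
              (a ^+ 2 * fnorm (Ad *m E *m Bd *m B) ^+ 2)
  <= fnorm ((1%:M - A *m Ad) *m B) ^+ 2 + fnorm (A *m (1%:M - Bd *m B)) ^+ 2.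
Proof.
rewrite sqr_fnorm_sub_decomp lerBlDl -addrA lerD2r porder_le_min //.
  exact: sqr_fnorm_mulmxr_le.
by rewrite -!mulmxA sqr_fnorm_mulmxl_le // !mulmxA.
Qed.

Lemma sqr_fnorm_compl_le :
  fnorm ((1%:M - A *m Ad) *m B) ^+ 2 + fnorm (A *m (1%:M - Bd *m B)) ^+ 2
  <= b ^+ 4 * fnorm (Bd *m (1%:M - A *m Ad)) ^+ 2
     + a ^+ 4 * fnorm ((1%:M - Bd *m B) *m Ad) ^+ 2.
Proof.
have hermP := ctrmx_compl (pinv_herml pinvA).
have hermQ := ctrmx_compl (pinv_hermr pinvB).
have a_ge0 := spec_norm_ge0 specA; have b_ge0 := spec_norm_ge0 specB.
rewrite (exprD b 2 2) (exprD a 2 2) -(mulrA (b ^+ 2)) -(mulrA (a ^+ 2)).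
apply: lerD.
  apply: (le_trans (sqr_fnorm_herm_mulmx_le pinvB specB hermP)).
  by apply: ler_wpM2l; rewrite ?exprn_ge0 // -mulmxA sqr_fnorm_mulmxl_le.
apply: (le_trans (sqr_fnorm_mulmxl_pinv_le pinvA specA _)).
by apply: ler_wpM2l; rewrite ?exprn_ge0 // sqr_fnorm_pinv_mulmx_herm_le.
Qed.

Lemma sqr_fnorm_compl_le_eqrank : \rank B = \rank A ->
  fnorm ((1%:M - B *m Bd) *m A) ^+ 2 + fnorm (B *m (1%:M - Ad *m A)) ^+ 2
  <= a ^+ 2 * b ^+ 2 * (fnorm (Bd *m (1%:M - A *m Ad)) ^+ 2
                        + fnorm ((1%:M - Bd *m B) *m Ad) ^+ 2).
Proof.
move=> rankBA.
have a2_ge0 : 0 <= a ^+ 2 by rewrite exprn_ge0 ?(spec_norm_ge0 specA).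
have b2_ge0 : 0 <= b ^+ 2 by rewrite exprn_ge0 ?(spec_norm_ge0 specB).
have rangeBA : fnorm (A *m Ad *m (1%:M - B *m Bd)) ^+ 2
             = fnorm (B *m Bd *m (1%:M - A *m Ad)) ^+ 2.
  apply: sqr_fnorm_mul_compl_eqrank; rewrite ?mxrank_pinvl //;
    by [apply: pinv_herml | apply: pinv_idempl].
have corangeBA : fnorm (Bd *m B *m (1%:M - Ad *m A)) ^+ 2
               = fnorm (Ad *m A *m (1%:M - Bd *m B)) ^+ 2.
  apply: sqr_fnorm_mul_compl_eqrank; rewrite ?mxrank_pinvr //;
    by [apply: pinv_hermr | apply: pinv_idempr].
rewrite mulrDr; apply: lerD.
  apply: le_trans (sqr_fnorm_herm_mulmx_le pinvA specA (ctrmx_compl (pinv_herml pinvB))) _.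
  rewrite rangeBA -(mulrA (a ^+ 2)); apply: ler_wpM2l => //.
  by rewrite -mulmxA sqr_fnorm_mulmxl_le.
apply: le_trans (sqr_fnorm_mulmxl_pinv_le pinvB specB _) _.
rewrite corangeBA (mulrC (a ^+ 2)) -(mulrA (b ^+ 2)); apply: ler_wpM2l => //.
exact: sqr_fnorm_pinv_mulmx_herm_le (ctrmx_compl (pinv_hermr pinvB)).
Qed.

End Perturbation.

Section LowerBounds.
Variables (C : numClosedFieldType) (m n : nat).
Variables (A B : 'M[C]_(m, n)) (Ad Bd : 'M[C]_(n, m)) (a b : C).
Hypotheses (pinvA : is_pinv A Ad) (pinvB : is_pinv B Bd).
Hypotheses (specA : is_spec_norm A a) (specB : is_spec_norm B b).
Local Notation E := (B - A).

Lemma pinv_sub_lower_bound_of mu M : 0 <= M ->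
  fnorm E ^+ 2 - mu <= M * (fnorm (Bd *m (1%:M - A *m Ad)) ^+ 2
                            + fnorm ((1%:M - Bd *m B) *m Ad) ^+ 2) ->
  (fnorm E ^+ 2 - mu) / M + fnorm (Bd *m E *m Ad) ^+ 2 <= fnorm (Bd - Ad) ^+ 2.
Proof.
move=> M_ge0 le_mu; rewrite (sqr_fnorm_pinv_sub_decomp pinvA pinvB) -addrA addrC lerD2r.
by apply: ler_wdivrMr; rewrite ?addr_ge0 ?sqr_fnorm_ge0 // mulrC.
Qed.

Lemma pinv_sub_lower_bound M : a ^+ 4 <= M -> b ^+ 4 <= M ->
  (fnorm E ^+ 2 - Num.min (b ^+ 2 * fnorm (A *m Ad *m E *m Bd) ^+ 2)
                          (a ^+ 2 * fnorm (Ad *m E *m Bd *m B) ^+ 2)) / M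
  + fnorm (Bd *m E *m Ad) ^+ 2 <= fnorm (Bd - Ad) ^+ 2.
Proof.
move=> a4_le b4_le; have M_ge0 := le_trans (exprn_ge0 4 (spec_norm_ge0 specA)) a4_le.
apply: pinv_sub_lower_bound_of => //.
apply: (le_trans (sqr_fnorm_sub_min_le pinvA pinvB specA specB)).
apply: (le_trans (sqr_fnorm_compl_le pinvA pinvB specA specB)).
by rewrite mulrDr; apply: lerD; apply: ler_wpM2r; rewrite ?sqr_fnorm_ge0.
Qed.

Lemma pinv_sub_lower_bound_eqrank : \rank B = \rank A ->
  (fnorm E ^+ 2 - Num.min (a ^+ 2 * fnorm (B *m Bd *m E *m Ad) ^+ 2)
                          (b ^+ 2 * fnorm (Bd *m E *m Ad *m A) ^+ 2)) / (a ^+ 2 * b ^+ 2)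
  + fnorm (Bd *m E *m Ad) ^+ 2 <= fnorm (Bd - Ad) ^+ 2.
Proof.
move=> rankBA.
apply: pinv_sub_lower_bound_of.
  by rewrite mulr_ge0 ?exprn_ge0 ?(spec_norm_ge0 specA) ?(spec_norm_ge0 specB).
apply: le_trans (sqr_fnorm_compl_le_eqrank pinvA pinvB specA specB rankBA).
have := sqr_fnorm_sub_min_le pinvB pinvA specB specA.
by rewrite -[A - B]opprB !(mulmxN, mulNmx, fnormN).
Qed.

End LowerBounds.

Theorem theorem3p9 (C : numClosedFieldType) (m n : nat)
  (A B : 'M[C]_(m, n)) (Ad Bd : 'M[C]_(n, m)) (a b : C) :
  is_pinv A Ad -> is_pinv B Bd -> is_spec_norm A a -> is_spec_norm B b ->
  let E := B - A in
  let delta1 := (fnorm E ^+ 2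
        - Num.min (b ^+ 2 * fnorm (A *m Ad *m E *m Bd) ^+ 2)
                  (a ^+ 2 * fnorm (Ad *m E *m Bd *m B) ^+ 2))
        / Num.max (a ^+ 4) (b ^+ 4) in
  let delta2 := (fnorm E ^+ 2
        - Num.min (a ^+ 2 * fnorm (B *m Bd *m E *m Ad) ^+ 2)
                  (b ^+ 2 * fnorm (Bd *m E *m Ad *m A) ^+ 2))
        / Num.max (a ^+ 4) (b ^+ 4) in
  let eps1 := (fnorm E ^+ 2
        - Num.min (a ^+ 2 * fnorm (B *m Bd *m E *m Ad) ^+ 2)
                  (b ^+ 2 * fnorm (Bd *m E *m Ad *m A) ^+ 2))
        / (a ^+ 2 * b ^+ 2) in
  let eps2 := (fnorm E ^+ 2
        - Num.min (b ^+ 2 * fnorm (A *m Ad *m E *m Bd) ^+ 2)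
                  (a ^+ 2 * fnorm (Ad *m E *m Bd *m B) ^+ 2))
        / (a ^+ 2 * b ^+ 2) in
  Num.max (delta1 + fnorm (Bd *m E *m Ad) ^+ 2)
          (delta2 + fnorm (Ad *m E *m Bd) ^+ 2) <= fnorm (Bd - Ad) ^+ 2 /\
  (\rank B = \rank A ->
   Num.max (eps1 + fnorm (Bd *m E *m Ad) ^+ 2)
           (eps2 + fnorm (Ad *m E *m Bd) ^+ 2) <= fnorm (Bd - Ad) ^+ 2).
Proof.
move=> pinvA pinvB specA specB E delta1 delta2 eps1 eps2.
have cmp_ab : a ^+ 4 >=< b ^+ 4.
  by rewrite real_comparable ?ger0_real ?exprn_ge0 ?(spec_norm_ge0 specA) ?(spec_norm_ge0 specB).
have a4_le : a ^+ 4 <= Num.max (a ^+ 4) (b ^+ 4) by rewrite comparable_le_max ?lexx.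
have b4_le : b ^+ 4 <= Num.max (a ^+ 4) (b ^+ 4) by rewrite comparable_le_max ?lexx ?orbT.
split=> [|rankBA]; apply: porder_ge_max.
- exact: pinv_sub_lower_bound.
- have := pinv_sub_lower_bound pinvB pinvA specB specA b4_le a4_le.
  by rewrite -[A - B]opprB -[Ad - Bd]opprB !(mulmxN, mulNmx, fnormN).
- exact: pinv_sub_lower_bound_eqrank.
- have := pinv_sub_lower_bound_eqrank pinvB pinvA specB specA (esym rankBA).
  by rewrite -[A - B]opprB -[Ad - Bd]opprB !(mulmxN, mulNmx, fnormN) [b ^+ 2 * a ^+ 2]mulrC.
Qed.
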